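(* Let $\mathcal{A}=\{A,B\}$ be two quantum systems with finite-dimensional Hilbert spaces and $\rho_{AB}$ a state. Then $$\lim_{q\to1}\mathfrak{X}_q^{\Delta_{\{A\}}}(\infty)=\lim_{q\to1}\widetilde{\mathfrak{X}}_q(\infty)=I(A:B)_\rho\ge0,$$ where $I(A:B)_\rho=S(A)+S(B)-S(AB)$ is the quantum mutual information.
   Context: For $q>1$ and nonempty $J\subseteq\mathcal{A}$: $S_q(J)_\rho=\frac{1}{1-q}(\operatorname{Tr}\rho_J^q-1)$ (Tsallis entropy of the reduced state), $S$ the von Neumann entropy, $C_q(J)_\rho=\sum_{v\in J}S_q(\{v\})_\rho-S_q(J)_\rho$. The filtration is $G(\varepsilon)=\{\varnothing\ne J\subseteq\mathcal{A}:C_q(J)_\rho\le\varepsilon\}$. $\Delta_{\{A\}}$ is the subcomplex consisting of the single vertex $\{A\}$. The relative integrated Euler characteristic is $\mathfrak{X}_q^{\Delta_{\{A\}}}(\infty)=\sum_{k\ge0}(-1)^k\int_0^\infty\operatorname{rank}H_k(G(\varepsilon),G(\varepsilon)\cap\Delta_{\{A\}};\mathbb{Z}_2)\,d\varepsilon$. The reduced integrated Euler characteristic is $\widetilde{\mathfrak{X}}_q(\infty)=\sum_{k\ge0}(-1)^k\int_0^\infty\widetilde\beta_k(\varepsilon)d\varepsilon$, where $\widetilde\beta_k=\operatorname{rank}H_k(G(\varepsilon);\mathbb{Z}_2)$ for $k>0$ and $\widetilde\beta_0=\max(\operatorname{rank}H_0(G(\varepsilon);\mathbb{Z}_2)-1,0)$.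 *)

From HB Require Import structures.
From mathcomp Require Import all_boot all_order all_algebra.
From mathcomp Require Import complex.
From mathcomp Require Import all_classical all_reals all_analysis.
Set Implicit Arguments. Unset Strict Implicit. Unset Printing Implicit Defensive.
Import Order.TTheory GRing.Theory Num.Theory.
Local Open Scope ring_scope.

(* The relative chain complex C(K)/C(L) has basis the simplices of K \ L;   *)
(* its boundary map sends a k-simplex to the sum of its (k-1)-faces lying   *)
(* in K \ L.  rank H_k = dim ker d_k - rank d_{k+1}.                        *)

Definition simp (V : finType) (K : {set {set V}}) (k : nat) : {set {set V}} :=
  [set s in K | #|s| == k.+1].

(* matrix of the boundary map d_{k+1} : C_{k+1}(K) -> C_k(K) over F_2
   (rows: (k+1)-simplices, columns: k-simplices) *)
Definition bdmx (V : finType) (K : {set {set V}}) (k : nat)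
  : 'M['F_2]_(#|simp K k.+1|, #|simp K k|) :=
  \matrix_(i, j) (if @enum_val _ (mem (simp K k)) j
                      \subset @enum_val _ (mem (simp K k.+1)) i
                  then 1 else 0).

Definition relbetti (V : finType) (K L : {set {set V}}) (k : nat) : nat :=
  let M := K :\: L in
  (#|simp M k| - (if k is k'.+1 then \rank (bdmx M k') else 0%N)
     - \rank (bdmx M k))%N.

Definition betti (V : finType) (K : {set {set V}}) (k : nat) : nat :=
  relbetti K finset.set0 k.

Definition rbetti (V : finType) (K : {set {set V}}) (k : nat) : nat :=
  if k is 0 then (betti K 0).-1 else betti K k.

(* sum_{k >= 0} (-1)^k int_0^oo b_k(eps) d eps.  Simplices have at most #|V|
   vertices, so b_k = 0 for k >= #|V|; the sum is taken over k < #|V|.+1. *)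
Definition integrated_euler (R : realType) (V : finType)
  (b : R -> nat -> nat) : \bar R :=
  (\sum_(k < #|V|.+1)
     ((-1) ^+ k)%:E *
     \int[lebesgue_measure]_(e in `[0%R, +oo[%classic) ((b e k)%:R)%:E)%E.

(* Quantum part: bipartite system AB with Hilbert space C^dA (x) C^dB.      *)
(* Basis vector |i>|j> of the tensor product is indexed by mxvec_index i j. *)

Local Open Scope sesquilinear_scope.
Local Open Scope complex_scope.

Definition is_state (R : realType) (n : nat) (rho : 'M[R[i]]_n) : Prop :=
  rho ^t* = rho /\
  (forall v : 'rV[R[i]]_n, 0 <= (v *m rho *m v ^t*) 0 0) /\
  \tr rho = 1.

Definition ptraceB (R : realType) (dA dB : nat) (rho : 'M[R[i]]_(dA * dB))
  : 'M[R[i]]_dA :=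
  \matrix_(i, i') \sum_(j < dB) rho (mxvec_index i j) (mxvec_index i' j).
Definition ptraceA (R : realType) (dA dB : nat) (rho : 'M[R[i]]_(dA * dB))
  : 'M[R[i]]_dB :=
  \matrix_(j, j') \sum_(i < dA) rho (mxvec_index i j) (mxvec_index i j').

Definition mxfun (R : realType) (n : nat) (f : R[i] -> R[i]) (M : 'M[R[i]]_n)
  : 'M[R[i]]_n :=
  invmx (spectralmx M) *m diag_mx (map_mx f (spectral_diag M)) *m spectralmx M.

(* Tr rho^q  (rho >= 0, q real; the eigenvalues are real) *)
Definition trpow (R : realType) (n : nat) (q : R) (rho : 'M[R[i]]_n) : R :=
  complex.Re (\tr (mxfun (fun z => ((complex.Re z) `^ q)%:C) rho)).

Definition tsallis (R : realType) (n : nat) (q : R) (rho : 'M[R[i]]_n) : R :=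
  (1 - q)^-1 * (trpow q rho - 1).

Definition vonNeumann (R : realType) (n : nat) (rho : 'M[R[i]]_n) : R :=
  - complex.Re (\tr (mxfun (fun z => (complex.Re z * ln (complex.Re z))%:C) rho)).

Definition mutual_info (R : realType) (dA dB : nat) (rho : 'M[R[i]]_(dA * dB)) : R :=
  vonNeumann (ptraceB rho) + vonNeumann (ptraceA rho) - vonNeumann rho.

Definition sysA : 'I_2 := ord0.
Definition sysB : 'I_2 := ord_max.

Definition SqJ (R : realType) (dA dB : nat) (q : R) (rho : 'M[R[i]]_(dA * dB))
  (J : {set 'I_2}) : R :=
  if J == [set sysA] then tsallis q (ptraceB rho)
  else if J == [set sysB] then tsallis q (ptraceA rho)
  else tsallis q rho.

Definition CqJ (R : realType) (dA dB : nat) (q : R) (rho : 'M[R[i]]_(dA * dB))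
  (J : {set 'I_2}) : R :=
  \sum_(v in J) SqJ q rho [set v] - SqJ q rho J.

Definition Gfilt (R : realType) (dA dB : nat) (q : R) (rho : 'M[R[i]]_(dA * dB))
  (eps : R) : {set {set 'I_2}} :=
  [set J | (J != finset.set0) && (CqJ q rho J <= eps)].

Definition DeltaA : {set {set 'I_2}} := [set [set sysA]].

Definition Xrel (R : realType) (dA dB : nat) (rho : 'M[R[i]]_(dA * dB)) (q : R)
  : \bar R :=
  @integrated_euler R 'I_2
    (fun e k => relbetti (Gfilt q rho e) (Gfilt q rho e :&: DeltaA) k).

Definition Xred (R : realType) (dA dB : nat) (rho : 'M[R[i]]_(dA * dB)) (q : R)
  : \bar R :=
  @integrated_euler R 'I_2 (fun e k => rbetti (Gfilt q rho e) k).

From HB Require Import structures.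
From mathcomp Require Import all_boot all_order all_algebra.
From mathcomp Require Import complex.
From mathcomp Require Import all_classical all_reals all_analysis.
From mathcomp Require Import ring lra.
Import Order.TTheory GRing.Theory Num.Theory.
Set Implicit Arguments. Unset Strict Implicit. Unset Printing Implicit Defensive.
Local Open Scope ring_scope.

(* For eps >= 0 the filtration G(eps) consists of the vertices A and B (whose
   total correlation is 0), together with the edge AB exactly when
   C_q(AB) <= eps.  Both the homology of G relative to {A} and the reduced
   homology of G are then concentrated in degree 0, of rank 1 before the edge
   appears and 0 afterwards, so both integrated Euler characteristics equal
   max (C_q(AB), 0).  As q -> 1 the Tsallis entropies tend to the von Neumann
   entropies, hence C_q(AB) -> I(A:B).

   I(A:B) >= 0 is subadditivity of the von Neumann entropy.  Write
   rho = sum_k p_k |psi_k><psi_k| and let e_i, f_j be eigenbases of rho_A,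
   rho_B.  The overlaps m_kij = |<e_i (x) f_j | psi_k>|^2 form a doubly
   stochastic array, and the eigenvalues a_i of rho_A and b_j of rho_B are
   the marginals of m_kij p_k.  Hence
   I(A:B) = sum m_kij p_k ln (p_k / (a_i b_j)) >= sum m_kij (p_k - a_i b_j) = 0
   by ln t <= t - 1. *)

Section SimplicialHomology.
Variable V : finType.
Implicit Types (K L : {set {set V}}) (k : nat).

Lemma simp_ge_card K k : (#|V| <= k)%N -> simp K k = finset.set0.
Proof.
move=> Vk; apply/setP => s; rewrite !inE; apply/negbTE.
by rewrite negb_and orbC neq_ltn ltnS (leq_trans (max_card _) Vk).
Qed.

Lemma rank_bdmx_simp0 K k : simp K k.+1 = finset.set0 -> \rank (bdmx K k) = 0%N.
Proof.
by move=> e; apply/eqP; rewrite -leqn0 (leq_trans (rank_leq_row _)) // e cards0.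
Qed.

Lemma rank_bdmx_simp1 K k s t :
  simp K k.+1 = [set s] -> t \in simp K k -> t \subset s -> \rank (bdmx K k) = 1%N.
Proof.
move=> hs ht ts; have s1 : s \in simp K k.+1 by rewrite hs set11.
apply/eqP; rewrite eqn_leq (leq_trans (rank_leq_row _)) ?hs ?cards1 //=.
rewrite lt0n mxrank_eq0; apply/negP.
move=> /eqP/matrixP/(_ (enum_rank_in s1 s) (enum_rank_in ht t)).
by rewrite !mxE !enum_rankK_in // ts.
Qed.

Lemma relbetti_simp0 K L k : simp (K :\: L) k = finset.set0 -> relbetti K L k = 0%N.
Proof.
move=> e; apply/eqP; rewrite /relbetti -subnDA subn_eq0.
by apply: leq_trans (_ : _ <= 0)%N _; rewrite ?e ?cards0.
Qed.

End SimplicialHomology.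

Definition two_vertices : {set {set 'I_2}} := [set [set sysA]; [set sysB]].
Definition full_simplex : {set {set 'I_2}} := [set: 'I_2] |: two_vertices.

Lemma sysA_eqB : (sysA == sysB) = false. Proof. by []. Qed.
Lemma sysB_eqA : (sysB == sysA) = false. Proof. by []. Qed.

Lemma I2P (x : 'I_2) : x = sysA \/ x = sysB.
Proof. by case: x => -[|[|//]] ?; [left|right]; apply: val_inj. Qed.

Lemma eq_subsetI2 (s t : {set 'I_2}) :
  (s == t) = ((sysA \in s) == (sysA \in t)) && ((sysB \in s) == (sysB \in t)).
Proof.
apply/eqP/andP => [->//|[/eqP a /eqP b]].
by apply/setP => x; case: (I2P x) => ->.
Qed.

Lemma subsetI2P (s : {set 'I_2}) :
  [\/ s = finset.set0, s = [set sysA], s = [set sysB] | s = [set: 'I_2]].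
Proof.
have E t : (s == t) = _ := eq_subsetI2 s t.
case a: (sysA \in s); case b: (sysB \in s);
  [apply: Or44|apply: Or42|apply: Or43|apply: Or41]; by apply/eqP; rewrite E a b !inE.
Qed.

Lemma eq_familyI2 (K L : {set {set 'I_2}}) :
  (forall s, s \in [:: finset.set0; [set sysA]; [set sysB]; [set: 'I_2]] ->
     (s \in K) = (s \in L)) ->
  K = L.
Proof.
by move=> e; apply/setP => s; case: (subsetI2P s) => ->; apply: e; rewrite !inE eqxx ?orbT.
Qed.

Ltac familyI2 := apply: eq_familyI2 => s;
  rewrite /simp /two_vertices /full_simplex /DeltaA !inE => /or4P[] /eqP ->;
  rewrite ?cards0 ?cards1 ?cardsT ?card_ord ?eq_subsetI2 ?inE ?eqxx ?sysA_eqB ?sysB_eqA //=.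

Lemma relbetti_two_vertices k :
  relbetti two_vertices (two_vertices :&: DeltaA) k = (k == 0%N).
Proof.
have s1 : simp (two_vertices :\: (two_vertices :&: DeltaA)) 1 = finset.set0 by familyI2.
case: k => [|[|k]].
- rewrite /relbetti (rank_bdmx_simp0 s1).
  by rewrite (_ : simp _ 0 = [set [set sysB]]) ?cards1 //; familyI2.
- exact: relbetti_simp0.
- by apply: relbetti_simp0; rewrite simp_ge_card // card_ord.
Qed.

Lemma relbetti_full_simplex k :
  relbetti full_simplex (full_simplex :&: DeltaA) k = 0%N.
Proof.
set M := full_simplex :\: (full_simplex :&: DeltaA).
have s0 : simp M 0 = [set [set sysB]] by familyI2.
have s1 : simp M 1 = [set [set: 'I_2]] by familyI2.
have d0 : \rank (bdmx M 0) = 1%N.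
  by apply: (rank_bdmx_simp1 (t := [set sysB]) s1); rewrite ?s0 ?set11 ?subsetT.
case: k => [|[|k]]; last by apply: relbetti_simp0; rewrite simp_ge_card // card_ord.
  by rewrite /relbetti d0 s0 cards1.
by rewrite /relbetti d0 rank_bdmx_simp0 ?s1 ?cards1 // simp_ge_card // card_ord.
Qed.

Lemma rbetti_two_vertices k : rbetti two_vertices k = (k == 0%N).
Proof.
have s1 : simp (two_vertices :\: finset.set0) 1 = finset.set0 by familyI2.
case: k => [|[|k]]; rewrite /rbetti /betti.
- rewrite /relbetti (rank_bdmx_simp0 s1).
  by rewrite (_ : simp _ 0 = two_vertices) ?cards2 ?eq_subsetI2 ?inE //; familyI2.
- exact: relbetti_simp0.
- by apply: relbetti_simp0; rewrite simp_ge_card // card_ord.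
Qed.

Lemma rbetti_full_simplex k : rbetti full_simplex k = 0%N.
Proof.
set M := full_simplex :\: finset.set0.
have s0 : simp M 0 = two_vertices by familyI2.
have s1 : simp M 1 = [set [set: 'I_2]] by familyI2.
have d0 : \rank (bdmx M 0) = 1%N.
  by apply: (rank_bdmx_simp1 (t := [set sysB]) s1); rewrite ?s0 ?subsetT // !inE eqxx orbT.
case: k => [|[|k]]; rewrite /rbetti /betti.
- by rewrite /relbetti -/M d0 s0 cards2 eq_subsetI2 !inE.
- by rewrite /relbetti -/M d0 rank_bdmx_simp0 ?s1 ?cards1 // simp_ge_card // card_ord.
- by apply: relbetti_simp0; rewrite simp_ge_card // card_ord.
Qed.

Local Open Scope classical_set_scope.
Import numFieldNormedType.Exports.

Section IntegratedEuler.
Variable R : realType.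

Lemma integral_halfline_lt (c : R) :
  (\int[lebesgue_measure]_(e in `[0%R, +oo[) ((nat_of_bool (e < c))%:R)%:E =
   (Num.max c 0)%:E)%E.
Proof.
transitivity (\int[lebesgue_measure]_(e in `[0%R, +oo[) (\1_(`]-oo, c[ : set R) e)%:E)%E.
  apply: eq_integral => e _; rewrite indicE; congr (_%:R)%:E.
  by congr nat_of_bool; rewrite mem_setE /= in_itv.
rewrite integral_indic; [|exact: measurable_itv..].
rewrite (_ : `]-oo, c[ `&` `[0, +oo[ = `[0, c[); last first.
  apply/seteqP; split => x /=; rewrite !in_itv /= andbT.
    by case=> -> ->.
  by case/andP=> -> ->.
have := lebesgue_measure_itv (Interval (BLeft 0%R) (BLeft c)); rewrite /= lte_fin => ->.
by case: ltP => c0; rewrite ?oppr0 ?adde0.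
Qed.

Lemma integrated_euler_step (V : finType) (b : R -> nat -> nat) (c : R) :
  (forall e, 0 <= e -> forall k, b e k = ((k == 0%N) && (e < c)) :> nat) ->
  integrated_euler V b = (Num.max c 0)%:E.
Proof.
move=> bE; rewrite /integrated_euler big_ord_recl big1 ?adde0 => [|k _].
  rewrite expr0 mul1e -integral_halfline_lt; apply: eq_integral => e.
  by rewrite inE /= in_itv /= andbT => /bE ->.
rewrite (eq_integral (fun=> 0%E)) ?integral0 ?mule0 // => e.
by rewrite inE /= in_itv /= andbT => /bE ->.
Qed.

End IntegratedEuler.

Section Filtration.
Variables (R : realType) (dA dB : nat) (q : R) (rho : 'M[R[i]]_(dA * dB)).

Lemma CqJ_set1 v : CqJ q rho [set v] = 0.
Proof. by rewrite /CqJ big_set1 subrr. Qed.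

Lemma CqJ_setT : CqJ q rho [set: 'I_2] =
  tsallis q (ptraceB rho) + tsallis q (ptraceA rho) - tsallis q rho.
Proof.
rewrite /CqJ (eq_bigl predT) => [|v]; last by rewrite inE.
by rewrite big_ord_recl big_ord1 /SqJ !eq_subsetI2 !inE.
Qed.

Lemma Gfilt_ge0 e : 0 <= e ->
  Gfilt q rho e = if CqJ q rho [set: 'I_2] <= e then full_simplex else two_vertices.
Proof.
by move=> e0; rewrite /Gfilt; case: ifP => Ce; familyI2; rewrite CqJ_set1.
Qed.

Lemma Xrel_max : Xrel rho q = (Num.max (CqJ q rho [set: 'I_2]) 0)%:E.
Proof.
apply: integrated_euler_step => e e0 k; rewrite Gfilt_ge0 //.
by case: leP; rewrite ?relbetti_full_simplex ?relbetti_two_vertices ?andbF ?andbT.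
Qed.

Lemma Xred_max : Xred rho q = (Num.max (CqJ q rho [set: 'I_2]) 0)%:E.
Proof.
apply: integrated_euler_step => e e0 k; rewrite Gfilt_ge0 //.
by case: leP; rewrite ?rbetti_full_simplex ?rbetti_two_vertices ?andbF ?andbT.
Qed.

End Filtration.

Lemma ler_sum_term (R : numDomainType) (I : finType) (F : I -> R) i :
  (forall j, 0 <= F j) -> F i <= \sum_j F j.
Proof. by move=> F0; rewrite (bigD1 i) //= lerDl sumr_ge0. Qed.

Section TsallisLimit.
Variable R : realType.

Lemma expR_le1DxDsqr (x : R) : x <= 0 -> expR x <= 1 + x + x ^+ 2.
Proof.
move=> x0; have := expR_ge1Dx (- x); have := expRxMexpNx_1 x; have := expR_gt0 x.
rewrite expr2; nra.
Qed.

Lemma powR_diffq_ln_bound (p q : R) : 0 <= p <= 1 -> 1 < q ->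
  `| (p `^ q - p) / (q - 1) - p * ln p | <= (q - 1) * (p * ln p ^+ 2).
Proof.
move=> /andP[p0 p1] q1; have q10 : 0 < q - 1 by rewrite subr_gt0.
have [->|pn0] := eqVneq p 0.
  by rewrite powR0 ?gt_eqF ?(lt_trans ltr01 q1) // !(subrr, mul0r, mulr0) normr0.
have pp : 0 < p by rewrite lt_def pn0.
set x := (q - 1) * ln p.
have x0 : x <= 0 by rewrite /x pmulr_rle0 // ln_le0.
have pq : p `^ q = p * expR x.
  by rewrite /powR (negbTE pn0) -{2}(lnK pp) -expRD /x; congr expR; ring.
have -> : (p `^ q - p) / (q - 1) - p * ln p = p * (expR x - 1 - x) / (q - 1).
  by rewrite pq /x; field; rewrite gt_eqF.
have lo := expR_ge1Dx x; have up := expR_le1DxDsqr x0.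
rewrite ger0_norm; last by rewrite divr_ge0 ?mulr_ge0 ?(ltW q10) //; lra.
rewrite ler_pdivrMr // (_ : _ * (q - 1) = p * x ^+ 2); last by rewrite /x; ring.
by rewrite ler_wpM2l //; lra.
Qed.

Lemma tsallis_sum_cvg (I : finType) (p : I -> R) :
  (forall k, 0 <= p k) -> \sum_k p k = 1 ->
  (1 - q)^-1 * (\sum_k p k `^ q - 1) @[q --> 1^'+] --> - \sum_k p k * ln (p k).
Proof.
move=> p0 p1.
have pl1 k : p k <= 1 by rewrite -p1 ler_sum_term.
set K := \sum_k p k * ln (p k) ^+ 2.
have K0 : 0 <= K by rewrite sumr_ge0 // => k _; rewrite mulr_ge0 ?sqr_ge0.
apply/cvgrPdist_le => eps eps0; near=> q.
have q1 : 1 < q by near: q; exact: nbhs_right_gt.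
have qeps : (q - 1) * (K + 1) <= eps.
  rewrite -ler_pdivlMr ?ltr_wpDl // lerBlDl; near: q.
  by apply: nbhs_right_le; rewrite ltrDl divr_gt0 ?ltr_wpDl.
have -> : - \sum_k p k * ln (p k) - (1 - q)^-1 * (\sum_k p k `^ q - 1) =
    \sum_k ((p k `^ q - p k) / (q - 1) - p k * ln (p k)).
  rewrite sumrB -mulr_suml sumrB p1 addrC; congr (_ - _).
  by rewrite -[1 - q]opprB invrN mulNr opprK mulrC.
apply: le_trans (ler_norm_sum _ _ _) _.
apply: le_trans (_ : \sum_k (q - 1) * (p k * ln (p k) ^+ 2) <= _).
  by apply: ler_sum => k _; rewrite powR_diffq_ln_bound ?p0 ?pl1.
rewrite -mulr_sumr -/K; nra.
Unshelve. all: by end_near.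
Qed.

End TsallisLimit.

Lemma cvg_EFin_max0 (R : realType) (T : Type) (F : set_system T) {FF : Filter F}
    (f : T -> R) (l : R) :
  0 <= l -> f x @[x --> F] --> l -> (Num.max (f x) 0)%:E @[x --> F] --> l%:E.
Proof.
move=> l0 fl; apply/fine_cvgP; split; first exact: nearW.
apply/cvgrPdist_le => e e0; move/cvgrPdist_le/(_ e e0): fl; apply: filterS => x /=.
by apply: le_trans; rewrite /Num.max; case: ifP => // fx0; rewrite subr0 !ger0_norm //; lra.
Qed.

Lemma mul_ln_ratio_ge (R : realType) (m p a b : R) :
  0 <= m -> 0 <= p -> 0 <= a -> 0 <= b -> m * p <= a -> m * p <= b ->
  m * (p - a * b) <= m * p * (ln p - ln a - ln b).
Proof.
move=> m0 p0 a0 b0 mpa mpb.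
have [->|mn0] := eqVneq m 0; first by rewrite !mul0r.
have [->|pn0] := eqVneq p 0.
  by rewrite mulr0 mul0r sub0r mulrN oppr_le0 mulr_ge0 ?mulr_ge0.
have mp : 0 < m * p by rewrite mulr_gt0 // lt_def ?mn0 ?pn0.
have ap : 0 < a := lt_le_trans mp mpa.
have bp : 0 < b := lt_le_trans mp mpb.
have pp : 0 < p by rewrite lt_def pn0.
have lnt : ln a + ln b - ln p <= a * b / p - 1.
  have := @le_ln1Dx _ (a * b / p - 1).
  rewrite addrCA subrr addr0 -lnM ?posrE // -ln_div ?posrE ?mulr_gt0 //.
  by apply; have := divr_gt0 (mulr_gt0 ap bp) pp; lra.
have := ler_wpM2l (ltW mp) lnt.
have -> : m * p * (a * b / p - 1) = m * (a * b) - m * p by field; rewrite gt_eqF.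
lra.
Qed.

Lemma exchange_big3_rot (V : nmodType) (I J K : finType) (F : K -> I -> J -> V) :
  \sum_k \sum_i \sum_j F k i j = \sum_i \sum_j \sum_k F k i j.
Proof. by rewrite exchange_big; apply: eq_bigr => i _; rewrite exchange_big. Qed.

Lemma exchange_big3_rev (V : nmodType) (I J K : finType) (F : K -> I -> J -> V) :
  \sum_k \sum_i \sum_j F k i j = \sum_j \sum_i \sum_k F k i j.
Proof. by rewrite exchange_big3_rot exchange_big. Qed.

Section Subadditivity.
Variables (R : realType) (I J K : finType).
Variables (p : K -> R) (m : K -> I -> J -> R).
Hypotheses (p_ge0 : forall k, 0 <= p k) (m_ge0 : forall k i j, 0 <= m k i j).
Hypotheses (sum_p : \sum_k p k = 1) (sum_m_ij : forall k, \sum_i \sum_j m k i j = 1).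
Hypothesis sum_m_k : forall i j, \sum_k m k i j = 1.

Definition marginalA i := \sum_j \sum_k m k i j * p k.
Definition marginalB j := \sum_i \sum_k m k i j * p k.

Let mp_ge0 k i j : 0 <= m k i j * p k := mulr_ge0 (m_ge0 k i j) (p_ge0 k).

Lemma marginalA_ge0 i : 0 <= marginalA i.
Proof. by rewrite sumr_ge0 // => j _; rewrite sumr_ge0. Qed.

Lemma marginalB_ge0 j : 0 <= marginalB j.
Proof. by rewrite sumr_ge0 // => i _; rewrite sumr_ge0. Qed.

Lemma le_marginalA k i j : m k i j * p k <= marginalA i.
Proof.
have := ler_sum_term (F := fun k' => m k' i j * p k') k (fun k' => mp_ge0 k' i j).
move/le_trans; apply.
by apply: (ler_sum_term (F := fun j' => \sum_k m k i j' * p k)) => j'; rewrite sumr_ge0.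
Qed.

Lemma le_marginalB k i j : m k i j * p k <= marginalB j.
Proof.
have := ler_sum_term (F := fun k' => m k' i j * p k') k (fun k' => mp_ge0 k' i j).
move/le_trans; apply.
by apply: (ler_sum_term (F := fun i' => \sum_k m k i' j * p k)) => i'; rewrite sumr_ge0.
Qed.

Lemma sum_weighted (F : K -> R) :
  \sum_k \sum_i \sum_j m k i j * F k = \sum_k F k.
Proof.
apply: eq_bigr => k _; rewrite -[RHS]mul1r -(sum_m_ij k) !mulr_suml.
by apply: eq_bigr => i _; rewrite mulr_suml.
Qed.

Lemma sum_marginalA : \sum_i marginalA i = 1.
Proof. by rewrite -sum_p -sum_weighted [RHS]exchange_big3_rot. Qed.

Lemma sum_marginalB : \sum_j marginalB j = 1.
Proof. by rewrite -sum_p -sum_weighted [RHS]exchange_big3_rev. Qed.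

Lemma sum_weighted_product :
  \sum_k \sum_i \sum_j m k i j * (marginalA i * marginalB j) = 1.
Proof.
rewrite exchange_big3_rot -[1]mul1r -{1}sum_marginalA -sum_marginalB mulr_suml.
apply: eq_bigr => i _; rewrite mulr_sumr; apply: eq_bigr => j _.
by rewrite -mulr_suml sum_m_k mul1r.
Qed.

Theorem entropy_marginals_le :
  \sum_i marginalA i * ln (marginalA i) + \sum_j marginalB j * ln (marginalB j)
    <= \sum_k p k * ln (p k).
Proof.
rewrite -subr_ge0 opprD addrA.
have -> : \sum_i marginalA i * ln (marginalA i) =
    \sum_k \sum_i \sum_j m k i j * p k * ln (marginalA i).
  rewrite exchange_big3_rot; apply: eq_bigr => i _.
  by rewrite /marginalA !mulr_suml; apply: eq_bigr => j _; rewrite mulr_suml.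
have -> : \sum_j marginalB j * ln (marginalB j) =
    \sum_k \sum_i \sum_j m k i j * p k * ln (marginalB j).
  rewrite exchange_big3_rev; apply: eq_bigr => j _.
  by rewrite /marginalB !mulr_suml; apply: eq_bigr => i _; rewrite mulr_suml.
rewrite -[\sum_k p k * _](sum_weighted (fun k => p k * ln (p k))).
have Z : \sum_k \sum_i \sum_j m k i j * (p k - marginalA i * marginalB j) = 0.
  apply: etrans (subrr (1 : R)).
  rewrite -{1}sum_p -sum_weighted -sum_weighted_product -sumrB.
  apply: eq_bigr => k _; rewrite -sumrB; apply: eq_bigr => i _.
  by rewrite -sumrB; apply: eq_bigr => j _; rewrite mulrBr.
rewrite -[leLHS]Z -!sumrB; apply: ler_sum => k _; rewrite -!sumrB; apply: ler_sum => i _.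
rewrite -!sumrB; apply: ler_sum => j _; rewrite mulrA -!mulrBr.
apply: mul_ln_ratio_ge;
  by rewrite ?marginalA_ge0 ?marginalB_ge0 ?le_marginalA ?le_marginalB.
Qed.

End Subadditivity.

Section MxvecIndex.
Variables m n : nat.

Lemma eq_mxvec_index (i i' : 'I_m) (j j' : 'I_n) :
  (mxvec_index i j == mxvec_index i' j') = (i == i') && (j == j').
Proof.
apply/eqP/andP => [/cast_ord_inj/(congr1 enum_val)|[/eqP-> /eqP->]] //.
by rewrite !enum_rankK => -[-> ->].
Qed.

Definition mxvec_unindex (r : 'I_(m * n)) : 'I_m * 'I_n :=
  enum_val (cast_ord (esym (mxvec_cast m n)) r).

Lemma mxvec_indexK (i : 'I_m) (j : 'I_n) : mxvec_unindex (mxvec_index i j) = (i, j).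
Proof. by rewrite /mxvec_unindex /mxvec_index cast_ordK enum_rankK. Qed.

Lemma sum_mxvec_index (V : nmodType) (F : 'I_(m * n) -> V) :
  \sum_k F k = \sum_i \sum_j F (mxvec_index i j).
Proof.
by rewrite (reindex _ (curry_mxvec_bij m n)) /= pair_bigA; apply: eq_bigr => -[].
Qed.

End MxvecIndex.

Section MatrixSums.
Variable R : pzSemiRingType.

Lemma mulmx3E m n p r (A : 'M[R]_(m, n)) (B : 'M[R]_(n, p)) (D : 'M[R]_(p, r)) i k :
  (A *m B *m D) i k = \sum_j \sum_l A i j * B j l * D l k.
Proof. by rewrite mxE exchange_big; apply: eq_bigr => l _; rewrite mxE mulr_suml. Qed.

Lemma sumr_delta n (F : 'I_n -> R) y : \sum_y' F y' * (y == y')%:R = F y.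
Proof.
rewrite (bigD1 y) //= eqxx mulr1 big1 ?addr0 // => y' /negbTE.
by rewrite eq_sym => ->; rewrite mulr0.
Qed.

Definition kronmx m n (U : 'M[R]_m) (W : 'M[R]_n) : 'M[R]_(m * n) :=
  \matrix_(r, s) (U (mxvec_unindex r).1 (mxvec_unindex s).1 *
                  W (mxvec_unindex r).2 (mxvec_unindex s).2).

End MatrixSums.

Section UnitaryMatrices.
Variable C : numClosedFieldType.
Local Open Scope sesquilinear_scope.

Lemma mulmx_diag_conjE m n (M : 'M[C]_(m, n)) (d : 'rV[C]_n) r :
  (M *m diag_mx d *m M^t*) r r = \sum_k M r k * (M r k)^* * d 0 k.
Proof. by rewrite mxE; apply: eq_bigr => k _; rewrite mul_mx_diag !mxE mulrAC. Qed.

Lemma unitarymx_rowsE m n (U : 'M[C]_(m, n)) i i' : U \is unitarymx ->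
  \sum_x U i x * (U i' x)^* = (i == i')%:R.
Proof.
move=> /unitarymxP/matrixP/(_ i i'); rewrite !mxE => <-.
by apply: eq_bigr => x _; rewrite !mxE.
Qed.

Lemma unitarymx_colsE n (U : 'M[C]_n) y y' : U \is unitarymx ->
  \sum_x U x y * (U x y')^* = (y == y')%:R.
Proof.
rewrite -trmx_unitary => /unitarymx_rowsE <-.
by apply: eq_bigr => x _; rewrite !mxE.
Qed.

Lemma selfadjoint_normalmx n (A : 'M[C]_n) : A ^t* = A -> A \is normalmx.
Proof. by move=> AA; apply/normalmxP; rewrite AA. Qed.

Lemma spectral_conj n (A : 'M[C]_n) : A \is normalmx ->
  spectralmx A *m A *m (spectralmx A)^t* = diag_mx (spectral_diag A).
Proof.
have /unitarymxP PP := spectral_unitarymx A.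
move=> /orthomx_spectralP {2}->; rewrite invmx_unitary ?spectral_unitarymx //.
by rewrite !mulmxA PP mul1mx -mulmxA PP mulmx1.
Qed.

Lemma kronmx_unitary m n (U : 'M[C]_m) (W : 'M[C]_n) :
  U \is unitarymx -> W \is unitarymx -> kronmx U W \is unitarymx.
Proof.
move=> Uu Wu; apply/unitarymxP/matrixP => r r'.
case/mxvec_indexP: r => i j; case/mxvec_indexP: r' => i' j'.
rewrite !mxE eq_mxvec_index sum_mxvec_index -mulnb natrM.
rewrite -(unitarymx_rowsE i i' Uu) -(unitarymx_rowsE j j' Wu) mulr_suml.
apply: eq_bigr => x _; rewrite mulr_sumr; apply: eq_bigr => y _.
by rewrite !mxE !mxvec_indexK rmorphM mulrACA.
Qed.

End UnitaryMatrices.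

Section PartialTrace.
Variables (R : realType) (dA dB : nat).
Local Open Scope sesquilinear_scope.
Implicit Types (rho : 'M[R[i]]_(dA * dB)) (U : 'M[R[i]]_dA) (W : 'M[R[i]]_dB).

Lemma ptraceB_kron_conj U W rho : W \is unitarymx ->
  ptraceB (kronmx U W *m rho *m (kronmx U W)^t*) = U *m ptraceB rho *m U^t*.
Proof.
move=> Wu; apply/matrixP => i i'; rewrite mxE mulmx3E.
under eq_bigr do rewrite mulmx3E sum_mxvec_index.
under eq_bigr do under eq_bigr do under eq_bigr do rewrite sum_mxvec_index.
(* Sum over j innermost: by unitarity of W it forces y' = y. *)
transitivity (\sum_x \sum_y \sum_x' \sum_y'
    U i x * rho (mxvec_index x y) (mxvec_index x' y') * (U i' x')^* *
    \sum_j W j y * (W j y')^*).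
  rewrite exchange_big; apply: eq_bigr => x _; rewrite exchange_big; apply: eq_bigr => y _.
  rewrite exchange_big; apply: eq_bigr => x' _; rewrite exchange_big.
  apply: eq_bigr => y' _; rewrite mulr_sumr; apply: eq_bigr => j _.
  by rewrite !mxE !mxvec_indexK rmorphM /=; ring.
apply: eq_bigr => x _; rewrite exchange_big; apply: eq_bigr => x' _.
rewrite !mxE mulr_sumr mulr_suml; apply: eq_bigr => y _.
under eq_bigr do rewrite unitarymx_colsE //.
by rewrite sumr_delta mulrAC.
Qed.

Lemma ptraceB_adjoint rho : rho^t* = rho -> (ptraceB rho)^t* = ptraceB rho.
Proof.
move=> rhoA; apply/matrixP => x x'; rewrite !mxE rmorph_sum.
by apply: eq_bigr => y _; rewrite -{2}rhoA !mxE.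
Qed.

Lemma ptraceA_adjoint rho : rho^t* = rho -> (ptraceA rho)^t* = ptraceA rho.
Proof.
move=> rhoA; apply/matrixP => y y'; rewrite !mxE rmorph_sum.
by apply: eq_bigr => x _; rewrite -{2}rhoA !mxE.
Qed.

Lemma ptraceA_kron_conj U W rho : U \is unitarymx ->
  ptraceA (kronmx U W *m rho *m (kronmx U W)^t*) = W *m ptraceA rho *m W^t*.
Proof.
move=> Uu; apply/matrixP => j j'; rewrite mxE.
under eq_bigr do rewrite mulmx3E sum_mxvec_index.
under eq_bigr do under eq_bigr do under eq_bigr do rewrite sum_mxvec_index.
transitivity (\sum_x \sum_y \sum_x' \sum_y'
    W j y * rho (mxvec_index x y) (mxvec_index x' y') * (W j' y')^* *
    \sum_i U i x * (U i x')^*).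
  rewrite exchange_big; apply: eq_bigr => x _; rewrite exchange_big; apply: eq_bigr => y _.
  rewrite exchange_big; apply: eq_bigr => x' _; rewrite exchange_big.
  apply: eq_bigr => y' _; rewrite mulr_sumr; apply: eq_bigr => i _.
  by rewrite !mxE !mxvec_indexK rmorphM /=; ring.
rewrite mulmx3E.
under [RHS]eq_bigr do under eq_bigr do rewrite [ptraceA _ _ _]mxE mulr_sumr mulr_suml.
rewrite -[RHS]exchange_big3_rot; apply: eq_bigr => x _.
rewrite exchange_big.
under eq_bigr do under eq_bigr do rewrite unitarymx_colsE // -mulr_suml.
under eq_bigr do rewrite -mulr_suml.
rewrite sumr_delta; apply: eq_bigr => y _; apply: eq_bigr => y' _.
by rewrite !mxE.
Qed.

End PartialTrace.

Section DensityMatrices.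
Variable R : realType.
Local Open Scope sesquilinear_scope.
Local Open Scope complex_scope.
Local Notation C := R[i].

Definition eigval n (M : 'M[C]_n) k : R := complex.Re (spectral_diag M 0 k).

Lemma ge0_complexE (z : C) : 0 <= z -> z = (complex.Re z)%:C /\ 0 <= complex.Re z.
Proof. by case: z => a b; rewrite lecE /= => /andP[/eqP -> ->]. Qed.

Lemma Re_mul_ge0 (z w : C) : 0 <= z -> 0 <= w ->
  complex.Re (z * w) = complex.Re z * complex.Re w.
Proof. by move=> /ge0_complexE[-> _] /ge0_complexE[-> _]; rewrite -rmorphM. Qed.

Lemma mxtrace_mxfun n f (M : 'M[C]_n) : \tr (mxfun f M) = \sum_k f (spectral_diag M 0 k).
Proof.
rewrite /mxfun mxtrace_mulC mulmxA mulmxV ?spectral_unit // mul1mx mxtrace_diag.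
by apply: eq_bigr => k _; rewrite mxE.
Qed.

Lemma trpowE n q (M : 'M[C]_n) : trpow q M = \sum_k eigval M k `^ q.
Proof. by rewrite /trpow mxtrace_mxfun raddf_sum. Qed.

Lemma vonNeumannE n (M : 'M[C]_n) :
  vonNeumann M = - \sum_k eigval M k * ln (eigval M k).
Proof. by rewrite /vonNeumann mxtrace_mxfun raddf_sum. Qed.

Lemma tsallis_cvg n (M : 'M[C]_n) :
  (forall k, 0 <= eigval M k) -> \sum_k eigval M k = 1 ->
  tsallis q M @[q --> 1^'+] --> vonNeumann M.
Proof.
move=> M0 M1; rewrite vonNeumannE (_ : (fun q => _) = fun q =>
  (1 - q)^-1 * (\sum_k eigval M k `^ q - 1)); first exact: tsallis_sum_cvg.
by apply/funext => q; rewrite /tsallis trpowE.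
Qed.

Lemma state_spectral_diag_ge0 n (M : 'M[C]_n) : is_state M ->
  forall k, 0 <= spectral_diag M 0 k.
Proof.
move=> [/selfadjoint_normalmx/spectral_conj MD [M0 _]] k.
have := M0 (row k (spectralmx M)); rewrite -row_mul.
have -> : (row k (spectralmx M *m M) *m (row k (spectralmx M))^t*) 0 0 =
    (spectralmx M *m M *m (spectralmx M)^t*) k k.
  by rewrite !mxE; apply: eq_bigr => j _; rewrite !mxE.
by rewrite MD mxE eqxx mulr1n.
Qed.

Lemma state_eigval_ge0 n (M : 'M[C]_n) k : is_state M -> 0 <= eigval M k.
Proof. by move=> /state_spectral_diag_ge0/(_ k)/ge0_complexE[]. Qed.

Lemma state_eigval_sum n (M : 'M[C]_n) : is_state M -> \sum_k eigval M k = 1.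
Proof.
move=> [/selfadjoint_normalmx/spectral_conj MD [_ M1]].
rewrite /eigval -raddf_sum -mxtrace_diag -MD mxtrace_mulC mulmxA.
have : (spectralmx M)^t* \is unitarymx by rewrite trmxC_unitary spectral_unitarymx.
by move=> /unitarymxP; rewrite trmxCK => ->; rewrite mul1mx M1.
Qed.

Lemma state_tsallis_cvg n (M : 'M[C]_n) : is_state M ->
  tsallis q M @[q --> 1^'+] --> vonNeumann M.
Proof.
move=> Ms; apply: tsallis_cvg => [k|]; first exact: state_eigval_ge0.
exact: state_eigval_sum.
Qed.

End DensityMatrices.

Section BipartiteState.
Variables (R : realType) (dA dB : nat) (rho : 'M[R[i]]_(dA * dB)).
Hypothesis rho_state : is_state rho.
Local Open Scope sesquilinear_scope.

Let UAB := kronmx (spectralmx (ptraceB rho)) (spectralmx (ptraceA rho)).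
Let T := UAB *m (spectralmx rho)^t*.
(* [weight k i j] is the squared overlap between the k-th eigenvector of rho
   and the product of the i-th eigenvector of rho_A with the j-th one of rho_B. *)
Let weight k i j := complex.Re (T (mxvec_index i j) k * (T (mxvec_index i j) k)^*).

Let eigval_ge0 k : 0 <= eigval rho k := state_eigval_ge0 k rho_state.
Let eigval_sum : \sum_k eigval rho k = 1 := state_eigval_sum rho_state.

Lemma transition_unitary : T \is unitarymx.
Proof. by rewrite mul_unitarymx ?kronmx_unitary ?trmxC_unitary ?spectral_unitarymx. Qed.

Lemma weight_ge0 k i j : 0 <= weight k i j.
Proof. by have [] := ge0_complexE (mul_conjC_ge0 (T (mxvec_index i j) k)). Qed.

Lemma weight_sum_ij k : \sum_i \sum_j weight k i j = 1.
Proof.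
transitivity (complex.Re (\sum_r T r k * (T r k)^*)).
  by rewrite sum_mxvec_index raddf_sum; apply: eq_bigr => i _; rewrite raddf_sum.
by rewrite (unitarymx_colsE _ _ transition_unitary) eqxx.
Qed.

Lemma weight_sum_k i j : \sum_k weight k i j = 1.
Proof.
transitivity (complex.Re (\sum_k T (mxvec_index i j) k * (T (mxvec_index i j) k)^*)).
  by rewrite raddf_sum.
by rewrite (unitarymx_rowsE _ _ transition_unitary) eqxx.
Qed.

Lemma Re_conj_state_diag i j :
  complex.Re ((UAB *m rho *m UAB^t*) (mxvec_index i j) (mxvec_index i j)) =
  \sum_k weight k i j * eigval rho k.
Proof.
have [rhoA _] := rho_state.
have /orthomx_spectralP rhoE := selfadjoint_normalmx rhoA.
rewrite invmx_unitary ?spectral_unitarymx // in rhoE.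
have -> : UAB *m rho *m UAB^t* = T *m diag_mx (spectral_diag rho) *m T^t*.
  by rewrite {1}rhoE /T trmx_mul map_mxM trmxCK !mulmxA.
rewrite mulmx_diag_conjE raddf_sum; apply: eq_bigr => k _.
by rewrite -[LHS]/(complex.Re _) Re_mul_ge0 ?mul_conjC_ge0 ?state_spectral_diag_ge0.
Qed.

Lemma eigval_ptraceB : eigval (ptraceB rho) = marginalA (eigval rho) weight.
Proof.
have [rhoA _] := rho_state; apply/funext => i.
have /selfadjoint_normalmx/spectral_conj := ptraceB_adjoint rhoA.
move=> /matrixP/(_ i i); rewrite [diag_mx _ _ _]mxE eqxx mulr1n /eigval => <-.
rewrite -(ptraceB_kron_conj _ _ (spectral_unitarymx (ptraceA rho))) -/UAB mxE raddf_sum.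
by apply: eq_bigr => j _; rewrite -[LHS]/(complex.Re _) Re_conj_state_diag.
Qed.

Lemma eigval_ptraceA : eigval (ptraceA rho) = marginalB (eigval rho) weight.
Proof.
have [rhoA _] := rho_state; apply/funext => j.
have /selfadjoint_normalmx/spectral_conj := ptraceA_adjoint rhoA.
move=> /matrixP/(_ j j); rewrite [diag_mx _ _ _]mxE eqxx mulr1n /eigval => <-.
rewrite -(ptraceA_kron_conj _ _ (spectral_unitarymx (ptraceB rho))) -/UAB mxE raddf_sum.
by apply: eq_bigr => i _; rewrite -[LHS]/(complex.Re _) Re_conj_state_diag.
Qed.

Lemma ptraceB_tsallis_cvg :
  tsallis q (ptraceB rho) @[q --> 1^'+] --> vonNeumann (ptraceB rho).
Proof.
apply: tsallis_cvg; rewrite eigval_ptraceB.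
  by move=> i; apply: marginalA_ge0 => //; exact: weight_ge0.
by apply: sum_marginalA; [exact: eigval_sum | exact: weight_sum_ij].
Qed.

Lemma ptraceA_tsallis_cvg :
  tsallis q (ptraceA rho) @[q --> 1^'+] --> vonNeumann (ptraceA rho).
Proof.
apply: tsallis_cvg; rewrite eigval_ptraceA.
  by move=> j; apply: marginalB_ge0 => //; exact: weight_ge0.
by apply: sum_marginalB; [exact: eigval_sum | exact: weight_sum_ij].
Qed.

Lemma mutual_info_ge0 : 0 <= mutual_info rho.
Proof.
have := entropy_marginals_le eigval_ge0 weight_ge0 eigval_sum weight_sum_ij weight_sum_k.
by rewrite /mutual_info !vonNeumannE eigval_ptraceB eigval_ptraceA; lra.
Qed.

End BipartiteState.

Theorem corollary2 (R : realType) (dA dB : nat) (rho : 'M[R[i]]_(dA * dB)) :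
  is_state rho ->
  Xrel rho q @[q --> 1^'+] --> (mutual_info rho)%:E /\
  Xred rho q @[q --> 1^'+] --> (mutual_info rho)%:E /\
  0 <= mutual_info rho.
Proof.
move=> rho_state; have I_ge0 := mutual_info_ge0 rho_state.
have C_cvg : CqJ q rho [set: 'I_2] @[q --> 1^'+] --> mutual_info rho.
  under eq_fun do rewrite CqJ_setT.
  apply: cvgB; first apply: cvgD.
  - exact: ptraceB_tsallis_cvg.
  - exact: ptraceA_tsallis_cvg.
  - exact: state_tsallis_cvg.
have X_cvg := cvg_EFin_max0 I_ge0 C_cvg.
split; [|split=> //].
- by under eq_fun do rewrite Xrel_max; exact: X_cvg.
- by under eq_fun do rewrite Xred_max; exact: X_cvg.
Qed.
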